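(* Let $k,p>0$ be integers and let $U$ be a function assignment for $\mathbb{N}^k$. Then there exist a finite set $A\subseteq\mathbb{N}^k$ and a set $E\subseteq\mathbb{N}$ with $|E|=p$ and $E^k\subseteq A$ such that $U(A)$ has at most $k^k\,p$ regressive values on $E^k$.
   Context: $\mathbb{N}=\{0,1,2,\dots\}$. For $x\in\mathbb{N}^k$, $\min(x)$ is the minimum coordinate and $|x|$ the maximum coordinate of $x$. A function assignment for a set $S$ is a map $U$ assigning to each finite subset $A\subseteq S$ a function $U(A):A\to A$. For $B\subseteq\mathbb{N}^k$ and a function $F$ defined on $B$ with values in $\mathbb{N}^k$, $y$ is a regressive value of $F$ on $B$ iff there exists $x\in B$ with $F(x)=y$ and $|y|<\min(x)$. *)

From mathcomp Require Import all_boot.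
From mathcomp Require Export finmap.
Set Implicit Arguments. Unset Strict Implicit. Unset Printing Implicit Defensive.
Open Scope fset_scope.

Definition pt (k : nat) := (k.-tuple nat)%type.

Definition tmax k (x : pt k) : nat := foldr maxn 0 x.
(* min(x) = minimum coordinate (only meaningful for k > 0). *)
Definition tmin k (x : pt k) : nat := foldr minn (head 0 x) x.

Definition fun_assignment (k : nat) :=
  forall A : {fset pt k}, A -> A.

Definition in_power k (E : {fset nat}) (x : pt k) : bool := all (fun a => a \in E) x.

Definition regressive_values k (U : fun_assignment k) (A : {fset pt k})
  (E : {fset nat}) : {fset pt k} :=
  [fset val (U A x) | x : A & in_power E (val x) && (tmax (val (U A x)) < tmin (val x))].

From mathcomp Require Import all_boot finmap.
From Stdlib Require Import Classical ClassicalEpsilon.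
Set Implicit Arguments. Unset Strict Implicit. Unset Printing Implicit Defensive.
Open Scope fset_scope.

(* By König's lemma the regressive parts of the maps U([0,n]^k) converge pointwise along a
   subsequence to a regressive partial map H on N^k, which agrees with U([0,n]^k) on [0,M]^k
   for arbitrarily large n.  A point with coordinates in an increasing sequence s of length k
   is s o t for a pattern t : [k] -> [k]; colour s by H(s o t) for every pattern t hitting the
   first entry of s.  Such a colour lies below min s, so Ramsey's theorem yields an infinite
   set Y on which all these colourings are min-homogeneous: the colour of s only depends on
   min s.  Let E be the first p of p + k - 1 elements of Y, and F the remaining ones.  Every
   regressive value on E^k is H(s o t) for an s in Y with min s in E, and min-homogeneity
   lets us replace the rest of s by F; so the value is determined by t and min s, and there
   are at most k^k p of them. *)

Definition unbounded (X : nat -> Prop) := forall N, exists n, N <= n /\ X n.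

Lemma unbounded_True : unbounded (fun _ => True).
Proof. by move=> N; exists N. Qed.

Lemma unbounded_geq (X : nat -> Prop) m :
  unbounded X -> unbounded (fun n => X n /\ m <= n).
Proof.
move=> HX N; have [n [Nn Xn]] := HX (maxn N m).
by exists n; rewrite geq_max in Nn; case/andP: Nn.
Qed.

Lemma unbounded_pigeonhole (V : eqType) (X : nat -> Prop) (f : nat -> V) (L : seq V) :
  unbounded X -> (forall n, X n -> f n \in L) ->
  exists2 v, v \in L & unbounded (fun n => X n /\ f n = v).
Proof.
elim: L X => [|v L IH] X HX HL.
  by have [n [_ Xn]] := HX 0; have := HL n Xn.
case: (classic (unbounded (fun n => X n /\ f n = v))) => [Hv|Hv].
  by exists v; rewrite ?mem_head.
have [N0 HN0] : exists N0, forall n, N0 <= n -> X n -> f n != v.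
  apply: NNPP => H; apply: Hv => N; apply: NNPP => H2; apply: H.
  by exists N => n Nn Xn; apply/eqP => fv; apply: H2; exists n.
have [w wL Hw] : exists2 w, w \in L & unbounded (fun n => (X n /\ N0 <= n) /\ f n = w).
  apply: IH (unbounded_geq N0 HX) _ => n [Xn N0n]; move: (HL n Xn); rewrite inE => /predU1P[fv|//].
  by move: (HN0 n N0n Xn); rewrite fv eqxx.
exists w; first by rewrite inE wL orbT.
by move=> N; have [n [Nn [[Xn _] fw]]] := Hw N; exists n.
Qed.

Lemma unbounded_dependent_choice (W : Type)
    (P : nat -> (nat -> Prop) -> W -> (nat -> Prop) -> Prop) :
  (forall i Z, unbounded Z -> exists w Z', unbounded Z' /\ P i Z w Z') ->
  forall X, unbounded X -> exists (Z : nat -> nat -> Prop) (w : nat -> W),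
    Z 0 = X /\ forall i, unbounded (Z i) /\ P i (Z i) (w i) (Z i.+1).
Proof.
move=> HP X HX.
have inhW : inhabited (W * (nat -> Prop)).
  by have [w [Z' _]] := HP 0 X HX; exact: inhabits (w, Z').
pose next i Z := epsilon inhW (fun wZ => unbounded wZ.2 /\ P i Z wZ.1 wZ.2).
have next_spec i Z : unbounded Z -> unbounded (next i Z).2 /\ P i Z (next i Z).1 (next i Z).2.
  move=> UZ; apply: (epsilon_spec inhW (fun wZ => unbounded wZ.2 /\ P i Z wZ.1 wZ.2)).
  by have [w [Z' HZ']] := HP i _ UZ; exists (w, Z').
pose fix Z i := if i is i'.+1 then (next i' (Z i')).2 else X.
exists Z, (fun i => (next i (Z i)).1); split=> // i.
suff UZ : unbounded (Z i) by split=> //; case: (next_spec i _ UZ).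
by elim: i => //= i /(next_spec i) [].
Qed.

Lemma unbounded_sorted_seq (Y : nat -> Prop) : unbounded Y ->
  forall N m, exists s, [/\ size s = N, path ltn m s & forall b, b \in s -> Y b].
Proof.
move=> HY; elim=> [|N IH] m; first by exists [::].
have [y [my Yy]] := HY m.+1; have [s [sz ps Hs]] := IH y.
exists (y :: s); split=> /=; [by rewrite sz | by rewrite my | ].
by move=> b /predU1P[->|/Hs].
Qed.

Lemma leq_incr (a : nat -> nat) : (forall i, a i < a i.+1) -> forall i, i <= a i.
Proof. by move=> Ha; elim=> // i IH; exact: leq_ltn_trans IH (Ha i). Qed.

Definition ramsey_property (r : nat) :=
  forall (V : eqType) (L : seq V) (c : seq nat -> V) (X : nat -> Prop),
  unbounded X -> (forall s, c s \in L) ->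
  exists Y : nat -> Prop, [/\ unbounded Y, (forall n, Y n -> X n) &
    exists2 v, v \in L & forall s, sorted ltn s -> size s = r ->
      (forall b, b \in s -> Y b) -> c s = v].

Lemma ramsey_property0 : ramsey_property 0.
Proof. by move=> V L c X UX HL; exists X; split=> //; exists (c [::]) => // -[]. Qed.

Section EndHomogeneous.
Variables (r : nat) (V : eqType) (L : nat -> seq V) (c : seq nat -> V).
Hypotheses (ramsey_r : ramsey_property r) (c_bounded : forall a B, c (a :: B) \in L a).

Lemma end_homogeneous_seq X : unbounded X ->
  exists (a : nat -> nat) (col : nat -> V),
  [/\ (forall i, a i < a i.+1), (forall i, X (a i)), (forall i, col i \in L (a i)) &
   forall i B, sorted ltn B -> size B = r ->
     (forall b, b \in B -> exists2 j, i < j & b = a j) -> c (a i :: B) = col i].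
Proof.
move=> UX.
(* a i is picked in Z i, and Z i.+1 is a subset of Z i above a i on which B |-> c (a i :: B)
   is constant. *)
pose P (_ : nat) (Z : nat -> Prop) (av : nat * V) (Z' : nat -> Prop) :=
  [/\ Z av.1, (forall b, Z' b -> Z b /\ av.1 < b), av.2 \in L av.1 &
      forall B, sorted ltn B -> size B = r -> (forall b, b \in B -> Z' b) ->
        c (av.1 :: B) = av.2].
have P_ex i Z : unbounded Z -> exists av Z', unbounded Z' /\ P i Z av Z'.
  move=> UZ; have [a [_ Za]] := UZ 0.
  have [Y [UY YZ [v vL Hv]]] :=
    @ramsey_r _ (L a) (fun B => c (a :: B)) _ (unbounded_geq a.+1 UZ) (c_bounded a).
  by exists (a, v), Y.
have [Z [w [Z0 HZ]]] := unbounded_dependent_choice P_ex UX.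
have Za i : Z i (w i).1 by case: (HZ i) => _ [].
have ZS i b : Z i.+1 b -> Z i b /\ (w i).1 < b.
  by case: (HZ i) => _ [_ ZS _ _]; apply: ZS.
have Z_sub i j : i <= j -> forall b, Z j b -> Z i b.
  by move/subnK <-; elim: (j - i) => // d IH b; rewrite addSn => /ZS [/IH].
exists (fun i => (w i).1), (fun i => (w i).2); split.
- by move=> i; case: (ZS i _ (Za i.+1)).
- by move=> i; rewrite -Z0; apply: Z_sub (Za i).
- by move=> i; case: (HZ i) => _ [].
- move=> i B sB szB HB; case: (HZ i) => _ [_ _ _]; apply=> // b /HB [j ij ->].
  exact: Z_sub ij _ (Za j).
Qed.

End EndHomogeneous.

Lemma ramsey_propertyS r : ramsey_property r -> ramsey_property r.+1.
Proof.
move=> HR V L c X UX HL.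
have [a [col [a_incr Xa colL Hcol]]] :=
  end_homogeneous_seq (L := fun _ => L) HR (fun a B => HL (a :: B)) UX.
have [v vL Hv] := unbounded_pigeonhole unbounded_True (fun n _ => colL n).
exists (fun b => exists2 i, col i = v & b = a i); split.
- move=> N; have [i [Ni [_ ci]]] := Hv N.
  by exists (a i); split; [exact: leq_trans Ni (leq_incr a_incr i) | exists i].
- by move=> _ [i _ ->].
exists v => // -[|x B] //= sB [szB] HY.
have xB b : b \in B -> x < b by apply/allP: b; exact: order_path_min ltn_trans sB.
have [i <- xi] := HY x (mem_head _ _); rewrite xi; apply: Hcol => //.
  exact: path_sorted sB.
move=> b bB; have [j _ bj] := HY b (mem_behead (s := x :: B) bB); exists j => //.
by rewrite -(leqW_mono (leq_mono (homo_ltn ltn_trans a_incr))) -xi -bj xB.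
Qed.

Theorem ramsey r : ramsey_property r.
Proof. by elim: r => [|r IH]; [exact: ramsey_property0 | exact: ramsey_propertyS]. Qed.

Definition min_homogeneous (V : Type) (c : seq nat -> V) (Y : nat -> Prop) (r : nat) :=
  forall a B B', Y a -> path ltn a B -> path ltn a B' -> size B = r -> size B' = r ->
    (forall b, b \in B -> Y b) -> (forall b, b \in B' -> Y b) -> c (a :: B) = c (a :: B').

Lemma min_homogeneous_sub (V : Type) (c : seq nat -> V) (Y Y' : nat -> Prop) r :
  min_homogeneous c Y r -> (forall n, Y' n -> Y n) -> min_homogeneous c Y' r.
Proof.
move=> Hc Y'Y a B B' /Y'Y Ya pB pB' szB szB' YB YB'.
by apply: Hc => // b bB; apply: Y'Y; auto.
Qed.

Lemma min_homogeneous_many (T V : eqType) (L : nat -> seq V) (g : T -> seq nat -> V) r :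
  (forall t a B, g t (a :: B) \in L a) -> forall (ts : seq T) X, unbounded X ->
  exists Y, [/\ unbounded Y, (forall n, Y n -> X n) &
                forall t, t \in ts -> min_homogeneous (g t) Y r].
Proof.
move=> gL; elim=> [|t ts IH] X UX; first by exists X.
have [Y1 [UY1 Y1X Y1h]] := IH X UX.
have [a [col [a_incr Y1a _ Hcol]]] := end_homogeneous_seq (ramsey r) (gL t) UY1.
have a_mono := leqW_mono (leq_mono (homo_ltn ltn_trans a_incr)).
exists (fun b => exists i, b = a i); split.
- by move=> N; exists (a N); split; [exact: leq_incr | exists N].
- by move=> _ [i ->]; apply/Y1X/Y1a.
move=> t'; rewrite inE => /predU1P[->|t'ts]; last first.
  by apply: min_homogeneous_sub (Y1h t' t'ts) _ => _ [i ->].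
move=> _ B B' [i ->] pB pB' szB szB' YB YB'.
have later C : path ltn (a i) C -> (forall b, b \in C -> exists j, b = a j) ->
    forall b, b \in C -> exists2 j, i < j & b = a j.
  move=> pC YC b bC; have [j bj] := YC b bC; exists j => //.
  by rewrite -a_mono -bj (allP (order_path_min ltn_trans pC) b bC).
by rewrite (Hcol i B (path_sorted pB) szB (later _ pB YB))
           (Hcol i B' (path_sorted pB') szB' (later _ pB' YB')).
Qed.

Lemma pointwise_limit (V : eqType) (h : nat -> nat -> V) (L : nat -> seq V) :
  (forall n i, h n i \in L i) ->
  exists g : nat -> V, forall m N, exists n, N <= n /\ forall i, i < m -> h n i = g i.
Proof.
move=> hL.
pose P i (Z : nat -> Prop) v (Z' : nat -> Prop) := forall n, Z' n -> Z n /\ h n i = v.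
have P_ex i Z : unbounded Z -> exists v Z', unbounded Z' /\ P i Z v Z'.
  move=> UZ; have [v _ Uv] := unbounded_pigeonhole UZ (fun n _ => hL n i).
  by exists v, (fun n => Z n /\ h n i = v); split=> // n.
have [Z [g [_ HZ]]] := unbounded_dependent_choice P_ex unbounded_True.
have Zg m n : Z m n -> forall i, i < m -> h n i = g i.
  elim: m n => [//|m IH] n Zn i; have [Zn' hn] := proj2 (HZ m) n Zn.
  by rewrite ltnS leq_eqVlt => /orP[/eqP->//|]; exact: IH.
exists g => m N; have [n [Nn Zn]] := proj1 (HZ m) N.
by exists n; split=> //; apply: Zg.
Qed.

Lemma leq_foldr_maxn (s : seq nat) a : a \in s -> a <= foldr maxn 0 s.
Proof.
by elim: s => //= b s IH /predU1P[->|/IH]; rewrite leq_max ?leqnn // => ->; rewrite orbT.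
Qed.

Lemma foldr_minn_leq (s : seq nat) d a : a \in s -> foldr minn d s <= a.
Proof.
by elim: s => //= b s IH /predU1P[->|/IH]; rewrite geq_min ?leqnn // => ->; rewrite orbT.
Qed.

Definition box k n : seq (pt k) :=
  [seq map_tuple (@nat_of_ord n.+1) t | t : k.-tuple 'I_n.+1].

Lemma mem_box k n (x : pt k) : (x \in box k n) = all (fun a => a <= n) x.
Proof.
apply/mapP/allP => [[t _ ->] _ /mapP[i _ ->]|xn]; first by rewrite -ltnS.
exists (map_tuple inord x); first by rewrite mem_enum.
apply: val_inj; rewrite /= -map_comp -[LHS]map_id; apply/eq_in_map => a /xn an /=.
by rewrite inordK.
Qed.

Definition cube k n : {fset pt k} := [fset x in box k n].

Definition regressive_at k (U : fun_assignment k) (A : {fset pt k}) (x : pt k) :=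
  if insub x : option A is Some z then
    let y := val (U A z) in if tmax y < tmin x then Some y else None
  else None.

Lemma regressive_at_lt k (U : fun_assignment k) (A : {fset pt k}) x y :
  regressive_at U A x = Some y -> tmax y < tmin x.
Proof. by rewrite /regressive_at; case: insub => // z; case: ifP => // lt [<-]. Qed.

Lemma regressive_at_val k (U : fun_assignment k) (A : {fset pt k}) (z : A) :
  tmax (val (U A z)) < tmin (val z) -> regressive_at U A (val z) = Some (val (U A z)).
Proof. by move=> lt; rewrite /regressive_at valK lt. Qed.

Definition options_below k m : seq (option (pt k)) := None :: map Some (box k m).

Lemma mem_options_below k m (o : option (pt k)) :
  (forall y, o = Some y -> tmax y <= m) -> o \in options_below k m.
Proof.
case: o => [y /(_ y erefl) ym|_]; last exact: mem_head.
rewrite inE /= mem_map ?mem_box; last exact: Some_inj.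
by apply/allP => a /leq_foldr_maxn /leq_trans; apply.
Qed.

Lemma regressive_limit k (U : fun_assignment k) :
  exists H : pt k -> option (pt k), (forall x y, H x = Some y -> tmax y < tmin x) /\
    forall M, exists2 n, M <= n & {in box k M, regressive_at U (cube k n) =1 H}.
Proof.
pose h n i :=
  if choice.unpickle i : option (pt k) is Some x then regressive_at U (cube k n) x else None.
pose L i :=
  if choice.unpickle i : option (pt k) is Some x then options_below k (tmin x) else [:: None].
have hL n i : h n i \in L i.
  rewrite /h /L; case: (choice.unpickle i : option (pt k)) => [x|]; last exact: mem_head.
  by apply: mem_options_below => y /regressive_at_lt /ltnW.
have [g Hg] := pointwise_limit hL.
have hg x n : (forall i, i < (choice.pickle x).+1 -> h n i = g i) ->
    regressive_at U (cube k n) x = g (choice.pickle x).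
  by move=> /(_ (choice.pickle x) (ltnSn _)); rewrite /h choice.pickleK.
exists (fun x => g (choice.pickle x)); split.
  by move=> x y; have [n [_ /hg <-]] := Hg (choice.pickle x).+1 0; apply: regressive_at_lt.
move=> M; have [n [Mn Hn]] := Hg (foldr maxn 0 (map choice.pickle (box k M))).+1 M.
exists n => // x xM; apply: hg => i; rewrite !ltnS => ix; apply: Hn.
exact: leq_trans ix (leq_foldr_maxn (map_f _ xM)).
Qed.

Lemma sorted_ltn_cat_lt (s1 s2 : seq nat) :
  sorted ltn (s1 ++ s2) -> {in s1 & s2, forall a b, a < b}.
Proof. by rewrite sorted_pairwise ?pairwise_cat => [/and3P[/allrelP]|] //; exact: ltn_trans. Qed.

Lemma sorted_ltn_cat (s1 s2 : seq nat) : sorted ltn s1 -> sorted ltn s2 ->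
  {in s1 & s2, forall a b, a < b} -> sorted ltn (s1 ++ s2).
Proof. by rewrite !(sorted_pairwise ltn_trans) pairwise_cat => -> -> /allrelP ->. Qed.

Definition pattern_pt k (t : k.-tuple 'I_k) (s : seq nat) : pt k :=
  map_tuple (fun i : 'I_k => nth 0 s i) t.

Lemma tmin_pattern_pt k (t : k.+1.-tuple 'I_k.+1) a B :
  ord0 \in t -> tmin (pattern_pt t (a :: B)) <= a.
Proof.
by move=> t0; apply: foldr_minn_leq; exact: (map_f (fun i : 'I_k.+1 => nth 0 (a :: B) i) t0).
Qed.

Lemma pattern_of_pt k (x : pt k.+1) a B :
  size B = k -> a \in x -> {subset x <= a :: B} ->
  exists2 t, ord0 \in t & pattern_pt t (a :: B) = x.
Proof.
move=> szB ax xaB; exists (map_tuple (fun b => inord (index b (a :: B))) x).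
  have -> : ord0 = inord (index a (a :: B)) :> 'I_k.+1 by apply: val_inj; rewrite /= eqxx inordK.
  exact: map_f ax.
apply: val_inj; rewrite /= -map_comp -[RHS]map_id; apply/eq_in_map => b bx /=.
have ib : index b (a :: B) < size (a :: B) by rewrite index_mem xaB.
by rewrite inordK ?nth_index ?xaB // -szB.
Qed.

Lemma padded_support k (x : pt k.+1) (E top : seq nat) :
  sorted ltn (E ++ top) -> k <= size top -> {subset x <= E} ->
  exists a B, [/\ a \in x, {subset x <= a :: B}, path ltn a B, size B = k &
                  {subset B <= E ++ top}].
Proof.
move=> sEt ktop xE.
pose S := sort leq (undup x); pose pad := take (k.+1 - size S) top.
have memS : S =i x by move=> b; rewrite mem_sort mem_undup.
have szS : size S <= k.+1 by rewrite size_sort (leq_trans (size_undup _)) ?size_tuple.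
have sSpad : sorted ltn (S ++ pad).
  apply: sorted_ltn_cat.
  - by rewrite ltn_sorted_uniq_leq sort_uniq undup_uniq sort_sorted //; exact: leq_total.
  - exact/take_sorted/(cat_sorted2 sEt).2.
  - by move=> a b; rewrite memS => /xE aE /mem_take; apply: sorted_ltn_cat_lt sEt a b aE.
case eS : S sSpad szS => [|a S'] sSpad szS.
  by have := mem_tnth ord0 x; rewrite -memS eS.
exists a, (S' ++ pad); split=> //.
- by rewrite -memS eS mem_head.
- by move=> b; rewrite -memS eS -cat_cons mem_cat => ->.
- by rewrite size_cat size_takel ?eS /= subSS ?subnKC // (leq_trans (leq_subr _ _)).
- move=> b; rewrite mem_cat => /orP[bS'|/mem_take bt]; last by rewrite mem_cat bt orbT.
  by rewrite mem_cat xE // -memS eS inE bS' orbT.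
Qed.

(* Only patterns hitting the first entry of s are coloured, so that the colour is below min s. *)
Definition pattern_coloring k (H : pt k.+1 -> option (pt k.+1))
    (t : k.+1.-tuple 'I_k.+1) (s : seq nat) : option (pt k.+1) :=
  if ord0 \in t then H (pattern_pt t s) else None.

Section PatternColoring.
Variables (k : nat) (H : pt k.+1 -> option (pt k.+1)).

Lemma pattern_coloring_below : (forall x y, H x = Some y -> tmax y < tmin x) ->
  forall t a B, pattern_coloring H t (a :: B) \in options_below k.+1 a.
Proof.
move=> H_lt t a B; rewrite /pattern_coloring; case: ifP => [t0|_]; last exact: mem_head.
apply: mem_options_below => y /H_lt lt.
exact: ltnW (leq_trans lt (tmin_pattern_pt _ _ t0)).
Qed.

Variable Y : nat -> Prop.
Hypothesis Y_hom : forall t, min_homogeneous (pattern_coloring H t) Y k.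

Lemma regressive_value_pattern (E top : seq nat) (x y : pt k.+1) :
  sorted ltn (E ++ top) -> size top = k -> (forall b, b \in E ++ top -> Y b) ->
  {subset x <= E} -> H x = Some y ->
  exists t, exists2 a, a \in E & pattern_coloring H t (a :: top) = Some y.
Proof.
move=> sEt sztop Ys xE Hx.
have [a [B [ax xaB pB szB BEt]]] := padded_support sEt (eq_leq (esym sztop)) xE.
have [t t0 tx] := pattern_of_pt szB ax xaB.
have aE := xE a ax.
exists t, a => //; rewrite -(@Y_hom t a B top) /pattern_coloring ?t0 ?tx //.
- by apply: Ys; rewrite mem_cat aE.
- rewrite (path_sortedE ltn_trans) (cat_sorted2 sEt).2 andbT.
  by apply/allP => b; apply: sorted_ltn_cat_lt sEt a b aE.
- by move=> b /BEt; apply: Ys.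
- by move=> b bt; apply: Ys; rewrite mem_cat bt orbT.
Qed.

Lemma card_regressive_values_le (U : fun_assignment k.+1) (n p : nat) (s : seq nat) :
  sorted ltn s -> size s = (p + k)%N -> (forall b, b \in s -> Y b) ->
  {in box k.+1 (foldr maxn 0 s), regressive_at U (cube k.+1 n) =1 H} ->
  #|` regressive_values U (cube k.+1 n) [fset a in take p s]| <= k.+1 ^ k.+1 * p.
Proof.
move=> ss szs Ys Hn; pose E := take p s; pose top := drop p s.
have sEt : sorted ltn (E ++ top) by rewrite cat_take_drop.
have sztop : size top = k by rewrite size_drop szs addKn.
have EtY b : b \in E ++ top -> Y b by rewrite cat_take_drop; apply: Ys.
pose L := [seq odflt (nseq_tuple k.+1 0) (pattern_coloring H t (a :: top)) |
           t <- enum {: k.+1.-tuple 'I_k.+1}, a <- E].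
apply: (@leq_trans #|` [fset y in L]|).
  apply/fsubset_leq_card/fsubsetP => _ /imfsetP [z /= /andP [zE zreg] ->].
  have xE : {subset val z <= E} by move=> a /(allP zE); rewrite inE.
  have Hz : H (val z) = Some (val (U _ z)).
    rewrite -Hn ?regressive_at_val // mem_box.
    by apply/allP => a /xE /mem_take /leq_foldr_maxn.
  have [t [a aE ta]] := regressive_value_pattern sEt sztop EtY xE Hz.
  by rewrite inE; apply/allpairsP; exists (t, a); rewrite /= mem_enum ta.
rewrite card_fseq (leq_trans (size_undup _)) // size_allpairs size_takel ?szs ?leq_addr //.
by rewrite -cardE card_tuple card_ord.
Qed.

End PatternColoring.

Theorem theorem0p6 (k p : nat) (hk : 0 < k) (hp : 0 < p) (U : fun_assignment k) :
  exists (A : {fset pt k}) (E : {fset nat}),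
    [/\ #|` E| = p,
        (forall x : pt k, in_power E x -> x \in A) &
        #|` regressive_values U A E| <= k ^ k * p].
Proof.
case: k hk U => // k _ U.
have [H [H_lt H_lim]] := regressive_limit U.
have [Y [UY _ Y_hom]] := min_homogeneous_many k (pattern_coloring_below H_lt)
  (enum {: k.+1.-tuple 'I_k.+1}) unbounded_True.
have [s [szs ps Ys]] := unbounded_sorted_seq UY (p + k) 0.
have ss : sorted ltn s := path_sorted ps.
have [n Mn Hn] := H_lim (foldr maxn 0 s).
exists (cube k.+1 n), [fset a in take p s]; split.
- rewrite card_fseq undup_id ?size_takel ?szs ?leq_addr //.
  exact/take_uniq/(sorted_uniq ltn_trans ltnn).
- move=> x /allP xE; rewrite inE mem_box; apply/allP => a /xE; rewrite inE.
  by move=> /mem_take /leq_foldr_maxn /leq_trans; apply.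
- exact: card_regressive_values_le (fun t => Y_hom t (mem_enum _ _)) U n p s ss szs Ys Hn.
Qed.
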